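(* Let $r\geq 3$ and $i\in\{1,2,\dots,r-1\}$, and let $M$ be the binary matroid obtained from the binary projective geometry $PG(r-1,2)$ (of rank $r$) by deleting the elements of a rank-$(r-i)$ flat. Then $M$ has a flat $F$ such that $M|F$ is isomorphic to either $M(K_4)$ or $U_{3,4}$. *)

From HB Require Import structures.
From mathcomp Require Import all_boot all_order all_algebra.
Set Implicit Arguments. Unset Strict Implicit. Unset Printing Implicit Defensive.
Import GRing.Theory.
Local Open Scope ring_scope.

(* Binary vectors of length r: the points of PG(r-1,2) are the nonzero ones. *)
Notation bvec r := ('rV['F_2]_r).

Definition brank (r : nat) (X : {set bvec r}) : nat := \dim <<enum X>>%VS.

Definition bindep (r : nat) (X : {set bvec r}) : bool := brank X == #|X|.

(* M = PG(r-1,2) \ (points of the flat W): ground set = nonzero vectors not in W.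
   A rank-k flat of PG(r-1,2) is the set of nonzero vectors of a k-dim subspace. *)
Definition ground (r : nat) (W : {vspace bvec r}) : {set bvec r} :=
  [set v : bvec r | (v != 0) && (v \notin W)].

Definition is_flat (r : nat) (E F : {set bvec r}) : Prop :=
  F \subset E /\
  forall e, e \in E -> brank (e |: F) = brank F -> e \in F.

Definition restr_iso (r : nat) (F : {set bvec r}) (U : finType)
    (indU : {set U} -> bool) : Prop :=
  exists f : bvec r -> U,
    [/\ {in F &, injective f}, f @: F = [set: U] &
        forall X : {set bvec r}, X \subset F -> bindep X = indU (f @: X)].

Definition U34_indep (X : {set 'I_4}) : bool := (#|X| <= 3)%N.

(* The cycle matroid M(K_4): edges are 2-subsets of the vertex set 'I_4;
   independent sets are forests, i.e. edge sets containing no cycle, which we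
   express as: every nonempty edge subset Y spans more than #|Y| vertices. *)
Definition K4edge := {e : {set 'I_4} | #|e| == 2}.
Definition K4_verts (Y : {set K4edge}) : {set 'I_4} :=
  \bigcup_(e in Y) val e.
Definition K4_indep (X : {set K4edge}) : bool :=
  [forall Y : {set K4edge}, (Y \subset X) && (Y != set0) ==> (#|Y| < #|K4_verts Y|)%N].

From HB Require Import structures.
From mathcomp Require Import all_boot all_order all_algebra.
From mathcomp Require Import zify.
From Stdlib Require Import Classical.
Set Implicit Arguments. Unset Strict Implicit. Unset Printing Implicit Defensive.
Import GRing.Theory.
Local Open Scope ring_scope.

(* Over GF(2) a set of vectors is dependent iff some nonempty subset of it sums
   to zero.  Let u be a vector outside the deleted subspace W; for every
   subspace S the nonzero vectors of S outside W form a flat of M.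
   If dim W >= 2, take S = <u, w1, w2> with w1, w2 independent in W: the flat
   is {u + x w1 + y w2}, in which only the whole set sums to zero, and four
   vectors of a 3-space are dependent; this is U_{3,4}.
   If W = <w>, take S = <a1, u, w> with a1 outside <u, w>: the flat is the
   Fano plane minus w.  Label the vertices of K_4 by 0, a1, u, a1 + u + w and
   each edge by the sum of its end labels; the six edge labels are exactly the
   flat.  An edge set sums to zero iff all its degrees are even, which forces
   at least as many edges as vertices; conversely the labels of a nonempty
   edge set Y lie in a space of dimension less than #|V(Y)| (spanned by the
   differences of vertex labels). *)

Lemma F2P (k : 'F_2) : k = 0 \/ k = 1.
Proof. by case: k => [[|[|k]] ltk2]; [left; apply: val_inj | right; apply: val_inj |]. Qed.

Section CharTwo.
Variable V : lmodType 'F_2.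

Lemma addrr_F2 (v : V) : v + v = 0.
Proof. by rewrite -mulr2n -scaler_nat (_ : 2%:R = 0) ?scale0r //; apply: val_inj. Qed.

Lemma mulrn_odd_F2 (v : V) n : v *+ n = v *+ odd n.
Proof.
by rewrite -[n in LHS]odd_double_half mulrnDr -muln2 mulrnA mulr2n addrr_F2 addr0.
Qed.

End CharTwo.

Section BinaryMatroid.
Variable r : nat.
Notation V := (bvec r).
Implicit Types (X Y : {set V}) (U : {vspace V}).

Lemma bindepE X : bindep X = free (enum X).
Proof. by rewrite /bindep /brank /free cardE. Qed.

Lemma bindepS X Y : Y \subset X -> bindep X -> bindep Y.
Proof.
rewrite !bindepE => sYX freeX.
have -> : free (enum Y) = free (filter (mem Y) (enum X)).
  apply/perm_free/uniq_perm; [exact: enum_uniq | by rewrite filter_uniq ?enum_uniq | move=> x].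
  by rewrite mem_enum mem_filter mem_enum andb_idr //; apply: (subsetP sYX).
exact: filter_free.
Qed.

Lemma bindepN_dim X U : {subset X <= U} -> (\dim U < #|X|)%N -> ~~ bindep X.
Proof.
move=> sXU ltUX; have le_XU : (\dim <<enum X>> <= \dim U)%N.
  by apply: dimvS; apply/span_subvP => x; rewrite mem_enum; apply: sXU.
by rewrite /bindep /brank neq_ltn (leq_ltn_trans le_XU ltUX).
Qed.

Lemma bindepN_zero_sum X : ~~ bindep X ->
  exists Y, [/\ Y \subset X, Y != set0 & \sum_(y in Y) y = 0].
Proof.
rewrite bindepE => /freeP; set s := enum_tuple X => notfree.
have [k nk] := not_all_ex_not _ _ notfree.
have [sk0 nk0] := imply_to_and _ _ nk.
have [i0 ki0] := not_all_ex_not _ _ nk0.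
exists [set s`_i | i : 'I_#|X| in [set i | k i != 0]]; split.
- by apply/subsetP => _ /imsetP [i _ ->]; rewrite -mem_enum mem_nth ?size_tuple.
- by apply/set0Pn; exists s`_i0; apply/imsetP; exists i0; rewrite // inE; apply/eqP.
rewrite big_imset /=; last first.
  by move=> i j _ _ /eqP; rewrite nth_uniq ?size_tuple ?enum_uniq // => /eqP /val_inj.
rewrite -[RHS]sk0 big_mkcond; apply: eq_bigr => i _; rewrite inE.
by case: (F2P (k i)) => ->; rewrite ?eqxx ?scale0r ?scale1r.
Qed.

Lemma bindepN_imset_zero_sum (T : finType) (p : T -> V) (Z : {set T}) :
  injective p -> ~~ bindep (p @: Z) ->
  exists Y : {set T}, [/\ Y \subset Z, Y != set0 & \sum_(t in Y) p t = 0].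
Proof.
move=> inj_p /bindepN_zero_sum [Y [sYpZ nzY sumY0]].
have pY y : y \in Y -> exists2 t, t \in Z & y = p t by move/(subsetP sYpZ)/imsetP.
exists (p @^-1: Y); split.
- by apply/subsetP => t; rewrite inE => /pY [z zZ /inj_p ->].
- by case/set0Pn: nzY => y /[dup] /pY [t _ ->] ptY; apply/set0Pn; exists t; rewrite inE.
have imY : p @: (p @^-1: Y) = Y.
  apply/setP => y; apply/imsetP/idP => [[t] | /[dup] /pY [t _ ->] ptY].
    by rewrite inE => ptY ->.
  by exists t; rewrite ?inE.
by rewrite -[RHS]sumY0 -[in RHS]imY big_imset // => s t _ _; apply: inj_p.
Qed.

Lemma mem_span_brank_setU1 X e : brank (e |: X) = brank X -> e \in <<enum X>>%VS.
Proof.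
move=> eq_rank; suff -> : <<enum X>>%VS = <<enum (e |: X)>>%VS.
  by rewrite memv_span // mem_enum setU11.
apply/eqP; rewrite eqEdim -[\dim <<enum (e |: X)>>]/(brank _) eq_rank leqnn andbT.
by apply/span_subvP => x; rewrite mem_enum => xX; rewrite memv_span // mem_enum setU1r.
Qed.

Lemma is_flat_subspace (E : {set V}) U : is_flat E (E :&: [set v | v \in U]).
Proof.
split=> [|e eE /mem_span_brank_setU1 eX]; first exact: subsetIl.
rewrite !inE eE; apply: subvP eX; apply/span_subvP => x.
by rewrite mem_enum !inE => /andP [].
Qed.

Lemma restr_iso_imset (T : finType) (t0 : T) (p : T -> V) (indT : {set T} -> bool) :
  injective p -> (forall Z : {set T}, bindep (p @: Z) = indT Z) -> restr_iso (p @: setT) indT.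
Proof.
move=> inj_p iso.
pose f v := odflt t0 [pick t | p t == v].
have pK : cancel p f.
  by move=> t; rewrite /f; case: pickP => [s /eqP /inj_p // | /(_ t)]; rewrite eqxx.
exists f; split.
- by move=> _ _ /imsetP [s _ ->] /imsetP [t _ ->]; rewrite !pK => ->.
- by apply/setP => t; rewrite in_setT; apply/imsetP; exists (p t); rewrite ?pK ?imset_f.
move=> X sX; rewrite -(iso (f @: X)); congr bindep; apply/setP => x.
apply/idP/imsetP => [xX | [_ /imsetP [y yX ->] ->]].
  by have /imsetP [t _ xE] := subsetP sX x xX; exists t => //; rewrite -(pK t) -xE imset_f.
by have /imsetP [t _ yE] := subsetP sX y yX; rewrite yE pK -yE.
Qed.

Lemma exists_flat_restr_iso (T : finType) (t0 : T) (p : T -> V) (indT : {set T} -> bool)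
    (W S : {vspace V}) :
  injective p -> (forall Z : {set T}, bindep (p @: Z) = indT Z) ->
  (forall t, p t \in S) -> (forall t, p t \notin W) ->
  (forall v, v \in S -> v != 0 -> v \notin W -> exists t, v = p t) ->
  exists F, is_flat (ground W) F /\ restr_iso F indT.
Proof.
move=> inj_p iso pS pW ontoS; exists (p @: setT); split; last exact: restr_iso_imset.
suff -> : p @: setT = ground W :&: [set v | v \in S] by apply: is_flat_subspace.
apply/setP => v; rewrite !inE; apply/imsetP/andP => [[t _ ->] | [/andP [nz0 vW] vS]].
  by rewrite pS pW andbT; split=> //; apply: contraNneq (pW t) => ->; rewrite mem0v.
by have [t ->] := ontoS v vS nz0 vW; exists t.
Qed.

End BinaryMatroid.

Section Extension.
Variables (K : fieldType) (vT : vectType K).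

Lemma exists_notin (U : {vspace vT}) : (\dim U < \dim {:vT})%N -> exists x, x \notin U.
Proof.
move=> ltU; have /subvPn [x _ xU] : ~~ ({:vT} <= U)%VS.
  by apply/negP => /dimvS; rewrite leqNgt ltU.
by exists x.
Qed.

Lemma exists_free2 (U : {vspace vT}) : (2 <= \dim U)%N ->
  exists w1 w2, [/\ w1 \in U, w2 \in U & free [:: w1; w2]].
Proof.
have := vbasisP U; case: (vbasis U) => s /= /eqP size_s basis_s.
have sU x : x \in s -> x \in U by move=> xs; rewrite -(span_basis basis_s) memv_span.
case: s size_s basis_s sU => [|w1 [|w2 s]] <- // basis_s sU _.
exists w1, w2; split; [apply: sU; exact: mem_head | apply: sU; by rewrite !inE eqxx orbT |].
exact: (catl_free (Y := s) (X := [:: w1; w2])) (basis_free basis_s).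
Qed.

Lemma dimv1P (U : {vspace vT}) : \dim U = 1%N -> exists2 w, w != 0 & U = <[w]>%VS.
Proof.
have := vbasisP U; case: (vbasis U) => s /= /eqP size_s basis_s.
case: s size_s basis_s => [|w [|x s]] <- // basis_s _.
by exists w; rewrite -?seq1_free ?(basis_free basis_s) // -(span_basis basis_s) span_seq1.
Qed.

End Extension.

Definition F2cube := ('F_2 * 'F_2 * 'F_2)%type.

Section Coordinates.
Variables (r : nat) (b1 b2 b3 : bvec r).

Definition comb3 (c : F2cube) : bvec r := c.1.1 *: b1 + c.1.2 *: b2 + c.2 *: b3.

Lemma comb3_is_nmod_morphism : nmod_morphism comb3.
Proof.
split=> [|[[c1 c2] c3] [[d1 d2] d3]]; first by rewrite /comb3 /= !scale0r !addr0.
by rewrite /comb3 /= !scalerDl [in RHS]addrACA (addrACA (c1 *: b1) (c2 *: b2)).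
Qed.

HB.instance Definition _ :=
  GRing.isNmodMorphism.Build F2cube (bvec r) comb3 comb3_is_nmod_morphism.

Lemma mem_comb3 c : comb3 c \in <<[:: b1; b2; b3]>>%VS.
Proof. by rewrite !memvD ?memvZ ?memv_span // !inE eqxx ?orbT. Qed.

Lemma comb3P v : v \in <<[:: b1; b2; b3]>>%VS -> exists c, v = comb3 c.
Proof.
rewrite !span_cons span_nil addv0.
case/memv_addP => _ /vlineP [k1 ->] [_ /memv_addP [_ /vlineP [k2 ->] [_ /vlineP [k3 ->] ->]] ->].
by exists (k1, k2, k3); rewrite /comb3 addrA.
Qed.

Hypothesis free_b : free [:: b1; b2; b3].

Lemma comb3_eq0 c : comb3 c = 0 -> c = 0.
Proof.
case: c => [[c1 c2] c3] c0; have /freeP free3 := free_b.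
have := free3 (fun i : 'I_3 => [:: c1; c2; c3]`_i).
rewrite !big_ord_recl big_ord0 addr0 addrA => /(_ c0) k0.
by move: (k0 ord0) (k0 (lift ord0 ord0)) (k0 (lift ord0 (lift ord0 ord0))) => /= -> -> ->.
Qed.

Lemma comb3_inj : injective comb3.
Proof.
move=> c d eq_cd; apply/eqP; rewrite -subr_eq0; apply/eqP/comb3_eq0.
by rewrite raddfB /= eq_cd subrr.
Qed.

End Coordinates.

(* Stated with the ordinals that [big_ord_recl] produces. *)
Lemma ord4P (t : 'I_4) :
  [\/ t = ord0, t = lift ord0 ord0, t = lift ord0 (lift ord0 ord0)
    | t = lift ord0 (lift ord0 (lift ord0 ord0))].
Proof.
case: t => [[|[|[|[|t]]]] lt_t4] //;
  [constructor 1 | constructor 2 | constructor 3 | constructor 4]; exact: val_inj.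
Qed.

Definition U34pt (t : 'I_4) : F2cube :=
  nth 0 [:: (1, 0, 0); (1, 1, 0); (1, 0, 1); (1, 1, 1)] t.

Lemma U34pt_inj : injective U34pt.
Proof.
move=> s t /eqP; apply: contraTeq.
by case: (ord4P s) => ->; case: (ord4P t) => ->; vm_compute.
Qed.

Lemma U34pt_zero_sum (Y : {set 'I_4}) :
  \sum_(t in Y) U34pt t = 0 -> Y = set0 \/ Y = setT.
Proof.
have sameY (m : 'I_4 -> bool) :
    \sum_t (if m t then U34pt t else 0) = 0 -> forall t, m t = m ord0.
  rewrite !big_ord_recl big_ord0 => /eqP sum0 t.
  case: (ord4P t) => -> //; move: sum0;
    by case: (m ord0); case: (m (lift ord0 ord0)); case: (m (lift ord0 (lift ord0 ord0)));
    case: (m (lift ord0 (lift ord0 (lift ord0 ord0)))); vm_compute=> ?.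
rewrite big_mkcond => /sameY Y_eq.
by case Y0 : (ord0 \in Y); [right | left]; apply/setP => t; rewrite !inE Y_eq Y0.
Qed.

Section U34.
Variables (r : nat) (W : {vspace bvec r}) (u w1 w2 : bvec r).
Hypotheses (free_u12 : free [:: u; w1; w2]) (uW : u \notin W).
Hypotheses (w1W : w1 \in W) (w2W : w2 \in W).

Lemma comb3_memW c : (comb3 u w1 w2 c \in W) = (c.1.1 == 0).
Proof.
rewrite /comb3 (rpredDr _ (memvZ _ w2W)) (rpredDr _ (memvZ _ w1W)).
by case: (F2P c.1.1) => ->; rewrite ?scale0r ?mem0v ?scale1r ?(negbTE uW) ?eqxx ?oner_eq0.
Qed.

Definition U34vec (t : 'I_4) : bvec r := comb3 u w1 w2 (U34pt t).

Lemma U34vec_inj : injective U34vec.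
Proof. by move=> s t /(comb3_inj free_u12) /U34pt_inj. Qed.

Lemma U34vec_notin t : U34vec t \notin W.
Proof. by rewrite comb3_memW; case: (ord4P t) => ->; vm_compute. Qed.

Lemma U34vec_onto v : v \in <<[:: u; w1; w2]>>%VS -> v != 0 -> v \notin W ->
  exists t, v = U34vec t.
Proof.
case/comb3P => [[[c1 c2] c3] ->] _; rewrite comb3_memW /=.
case: (F2P c1) => -> // _; rewrite /U34vec.
by case: (F2P c2) => ->; case: (F2P c3) => ->;
  [exists ord0 | exists (@Ordinal 4 2 isT) | exists (@Ordinal 4 1 isT) | exists (@Ordinal 4 3 isT)].
Qed.

Lemma bindep_U34vec (Z : {set 'I_4}) : bindep (U34vec @: Z) = U34_indep Z.
Proof.
rewrite /U34_indep; case: leqP => [leZ3 | gtZ3].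
  apply: contraT => /(bindepN_imset_zero_sum U34vec_inj) [Y [sYZ nzY sumY0]].
  move: sumY0; rewrite -raddf_sum => /(comb3_eq0 free_u12) /U34pt_zero_sum [Y0 | YT].
    by rewrite Y0 eqxx in nzY.
  by have := subset_leq_card sYZ; rewrite YT cardsT card_ord => /leq_trans /(_ leZ3).
apply/negbTE/(bindepN_dim (U := <<[:: u; w1; w2]>>%VS)) => [_ /imsetP [t _ ->] |].
  exact: mem_comb3.
by rewrite card_imset; [apply: leq_ltn_trans (dim_span _) _ | apply: U34vec_inj].
Qed.

Lemma U34_flat : exists F, is_flat (ground W) F /\ restr_iso F U34_indep.
Proof.
apply: (exists_flat_restr_iso ord0 U34vec_inj bindep_U34vec (S := <<[:: u; w1; w2]>>%VS)).
- by move=> t; apply: mem_comb3.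
- exact: U34vec_notin.
- exact: U34vec_onto.
Qed.

End U34.

Definition K4deg (Y : {set K4edge}) (v : 'I_4) : nat := #|[set e in Y | v \in val e]|.

Lemma sum_K4edge_deg (M : nmodType) (f : 'I_4 -> M) (Y : {set K4edge}) :
  \sum_(e in Y) \sum_(v in val e) f v = \sum_v f v *+ K4deg Y v.
Proof.
under eq_bigr do rewrite big_mkcond.
rewrite exchange_big; apply: eq_bigr => v _.
by rewrite -big_mkcondr -sumr_const; apply: eq_bigl => e; rewrite !inE.
Qed.

Lemma K4_handshake (Y : {set K4edge}) : (\sum_v K4deg Y v = 2 * #|Y|)%N.
Proof.
have cardE1 (T : finType) (B : {set T}) : #|B| = (\sum_x (x \in B))%N.
  by rewrite -sum1_card big_mkcond; apply: eq_bigr => x _; case: (x \in B).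
transitivity (\sum_v \sum_(e in Y) (v \in val e))%N.
  apply: eq_bigr => v _; rewrite /K4deg cardE1 [RHS]big_mkcond; apply: eq_bigr => e _.
  by rewrite inE; case: (e \in Y).
rewrite exchange_big (eq_bigr (fun=> 2%N)) => [|e _]; last by rewrite -cardE1 (eqP (valP e)).
by rewrite sum_nat_const mulnC.
Qed.

Lemma K4_even_verts_le (Y : {set K4edge}) :
  (forall v, ~~ odd (K4deg Y v)) -> (#|K4_verts Y| <= #|Y|)%N.
Proof.
move=> even_deg; rewrite -(leq_pmul2l (isT : 0 < 2)%N) -K4_handshake mulnC -sum_nat_const.
rewrite [X in (_ <= X)%N](bigID (mem (K4_verts Y))) /=; apply: leq_trans (leq_addr _ _).
apply: leq_sum => v /bigcupP [e eY ve].
have : (0 < K4deg Y v)%N by apply/card_gt0P; exists e; rewrite inE eY.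
by have := even_deg v; case: (K4deg Y v) => [|[|]].
Qed.

Lemma K4edgeP (e : K4edge) : exists i j, i != j /\ val e = [set i; j].
Proof. exact/cards2P/(valP e). Qed.

Lemma cards2_neq (T : finType) (x y : T) : x != y -> #|[set x; y]| == 2.
Proof. by rewrite cards2 => ->. Qed.

Definition mkK4edge (i j : 'I_4) (ij : i != j) : K4edge :=
  exist (fun e : {set 'I_4} => #|e| == 2) _ (cards2_neq ij).

Lemma eq_of_setU_card_le (T : finType) (A B : {set T}) n :
  #|A| = n -> #|B| = n -> (#|A :|: B| <= n)%N -> A = B.
Proof.
move=> cardA cardB cardAB.
have /eqP -> : A == A :|: B by rewrite eqEcard subsetUl cardA.
by have /eqP <- : B == A :|: B by rewrite eqEcard subsetUr cardB.
Qed.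

Section EdgeVectors.
Variables (r : nat) (f : 'I_4 -> bvec r).

Definition edgevec (e : K4edge) : bvec r := \sum_(v in val e) f v.

Lemma edgevec_pair e i j : i != j -> val e = [set i; j] -> edgevec e = f i + f j.
Proof. by move=> ij eE; rewrite /edgevec eE big_setU1 ?big_set1 ?inE. Qed.

Lemma edgevec_span (Y : {set K4edge}) : Y != set0 ->
  exists2 U : {vspace bvec r}, (\dim U < #|K4_verts Y|)%N & {subset edgevec @: Y <= U}.
Proof.
case/set0Pn => e0 e0Y; have [i0 [j0 [_ e0E]]] := K4edgeP e0.
have vertsP e i : e \in Y -> i \in val e -> i \in K4_verts Y.
  by move=> eY ie; apply/bigcupP; exists e.
have i0Y : i0 \in K4_verts Y by apply: (vertsP e0); rewrite // e0E !inE eqxx.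
pose U := <<[seq (f v + f i0)%R | v <- enum (K4_verts Y :\ i0)]>>%VS.
have fU v : v \in K4_verts Y -> f v + f i0 \in U.
  move=> vY; have [-> | vi0] := eqVneq v i0; first by rewrite addrr_F2 mem0v.
  by apply/memv_span/map_f; rewrite mem_enum !inE vi0.
exists U.
  apply: leq_ltn_trans (dim_span _) _.
  by rewrite size_map -cardE (cardsD1 i0 (K4_verts Y)) i0Y.
move=> _ /imsetP [e eY ->]; have [i [j [ij eE]]] := K4edgeP e.
rewrite (edgevec_pair ij eE) -[f i + f j]addr0 -(addrr_F2 (f i0)) addrACA.
by rewrite memvD // fU // (vertsP e) // eE !inE eqxx ?orbT.
Qed.

End EdgeVectors.

(* The six sums K4pt i + K4pt j (i != j) are the nonzero points other than (0, 0, 1). *)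
Definition K4pt (v : 'I_4) : F2cube := nth 0 [:: 0; (1, 0, 0); (0, 1, 0); (1, 1, 1)] v.

Lemma K4pt_zero_sum (m : 'I_4 -> bool) :
  \sum_v K4pt v *+ m v = 0 -> forall v, v != ord0 -> m v = false.
Proof.
rewrite !big_ord_recl big_ord0 => /eqP sum0 v.
case: (ord4P v) => -> //; move: sum0;
  by case: (m ord0); case: (m (lift ord0 ord0)); case: (m (lift ord0 (lift ord0 ord0)));
    case: (m (lift ord0 (lift ord0 (lift ord0 ord0)))); vm_compute=> ?.
Qed.

Lemma K4pt_pair_notin (i j : 'I_4) k : i != j -> K4pt i + K4pt j != (0, 0, k).
Proof.
by case: (F2P k) => ->; case: (ord4P i) => ->; case: (ord4P j) => ->; vm_compute.
Qed.

Section K4.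
Variables (r : nat) (W : {vspace bvec r}) (a1 a2 w : bvec r).
Hypotheses (free_a12w : free [:: a1; a2; w]) (W_line : W = <[w]>%VS).

Definition K4vtx (v : 'I_4) : bvec r := comb3 a1 a2 w (K4pt v).

Definition K4vec : K4edge -> bvec r := edgevec K4vtx.

Lemma K4vec_pair e i j :
  i != j -> val e = [set i; j] -> K4vec e = comb3 a1 a2 w (K4pt i + K4pt j).
Proof. by move=> ij eE; rewrite raddfD; apply: edgevec_pair. Qed.

Lemma K4vec_zero_sum_even (Y : {set K4edge}) :
  \sum_(e in Y) K4vec e = 0 -> forall v, ~~ odd (K4deg Y v).
Proof.
rewrite /K4vec /edgevec sum_K4edge_deg.
under eq_bigr do rewrite mulrn_odd_F2 /K4vtx -raddfMn.
rewrite -raddf_sum => /(comb3_eq0 free_a12w).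
move=> /(K4pt_zero_sum (m := fun v => odd (K4deg Y v))) odd_deg.
have odd_deg0 : ~~ odd (K4deg Y ord0).
  have := congr1 odd (K4_handshake Y); rewrite oddM andFb (bigD1 ord0) //= oddD.
  suff /negbTE -> : ~~ odd (\sum_(v | v != ord0) K4deg Y v) by rewrite addbF => ->.
  elim/big_ind: _ => // [m n | v /odd_deg -> //].
  by rewrite oddD => /negbTE -> /negbTE ->.
by move=> v; have [-> | /odd_deg ->] := eqVneq v ord0.
Qed.

Lemma K4vec_inj : injective K4vec.
Proof.
move=> e e' eqK; apply/eqP/negPn/negP => ne.
have sum0 : \sum_(e'' in [set e; e']) K4vec e'' = 0.
  by rewrite big_setU1 ?big_set1 ?inE //= eqK addrr_F2.
have := K4_even_verts_le (K4vec_zero_sum_even sum0).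
rewrite /K4_verts big_setU1 ?big_set1 ?inE //= cards2 ne.
move=> /(eq_of_setU_card_le (eqP (valP e)) (eqP (valP e'))) /val_inj eq_e.
by rewrite eq_e eqxx in ne.
Qed.

Lemma bindep_K4vec (Z : {set K4edge}) : bindep (K4vec @: Z) = K4_indep Z.
Proof.
apply/idP/forallP => [indepZ Y | forestZ].
  apply/implyP => /andP [sYZ nzY]; rewrite ltnNge; apply/negP => le_VY.
  have [U dimU sYU] := edgevec_span K4vtx nzY.
  have : ~~ bindep (K4vec @: Y).
    apply: (bindepN_dim sYU).
    by rewrite card_imset; [apply: leq_trans dimU le_VY | apply: K4vec_inj].
  by rewrite (bindepS (imsetS _ sYZ) indepZ).
apply: contraT => /(bindepN_imset_zero_sum K4vec_inj) [Y [sYZ nzY sumY0]].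
have le_VY : (#|K4_verts Y| <= #|Y|)%N by exact/K4_even_verts_le/K4vec_zero_sum_even.
by have := forestZ Y; rewrite sYZ nzY ltnNge le_VY.
Qed.

Lemma K4vec_notin e : K4vec e \notin W.
Proof.
have [i [j [ij eE]]] := K4edgeP e.
rewrite (K4vec_pair ij eE) W_line; apply/negP => /vlineP [k].
have -> : k *: w = comb3 a1 a2 w (0, 0, k) by rewrite /comb3 /= !scale0r !add0r.
by move/(comb3_inj free_a12w)/eqP; rewrite (negbTE (K4pt_pair_notin k ij)).
Qed.

Lemma K4vec_onto v : v \in <<[:: a1; a2; w]>>%VS -> v != 0 -> v \notin W ->
  exists e, v = K4vec e.
Proof.
have edge c (i j : 'I_4) (ij : i != j) :
    c = K4pt i + K4pt j -> exists e, comb3 a1 a2 w c = K4vec e.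
  by move=> ->; exists (mkK4edge ij); rewrite (K4vec_pair ij).
case/comb3P => [[[c1 c2] c3] ->].
case: (F2P c1) => ->; case: (F2P c2) => ->; case: (F2P c3) => ->.
- by rewrite raddf0 eqxx.
- by rewrite W_line /comb3 /= !scale0r !add0r scale1r memv_line.
- by move=> _ _; apply: (edge _ (@Ordinal 4 0 isT) (@Ordinal 4 2 isT) isT); apply/eqP; vm_compute.
- by move=> _ _; apply: (edge _ (@Ordinal 4 1 isT) (@Ordinal 4 3 isT) isT); apply/eqP; vm_compute.
- by move=> _ _; apply: (edge _ (@Ordinal 4 0 isT) (@Ordinal 4 1 isT) isT); apply/eqP; vm_compute.
- by move=> _ _; apply: (edge _ (@Ordinal 4 2 isT) (@Ordinal 4 3 isT) isT); apply/eqP; vm_compute.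
- by move=> _ _; apply: (edge _ (@Ordinal 4 1 isT) (@Ordinal 4 2 isT) isT); apply/eqP; vm_compute.
- by move=> _ _; apply: (edge _ (@Ordinal 4 0 isT) (@Ordinal 4 3 isT) isT); apply/eqP; vm_compute.
Qed.

Lemma K4_flat : exists F, is_flat (ground W) F /\ restr_iso F K4_indep.
Proof.
have e01 : K4edge := mkK4edge (isT : ord0 != lift ord0 ord0 :> 'I_4).
apply: (exists_flat_restr_iso e01 K4vec_inj bindep_K4vec (S := <<[:: a1; a2; w]>>%VS)).
- by move=> e; have [i [j [ij eE]]] := K4edgeP e; rewrite (K4vec_pair ij eE) mem_comb3.
- exact: K4vec_notin.
- exact: K4vec_onto.
Qed.

End K4.

Local Close Scope ring_scope.

Theorem lemma3p3 (r i : nat) (W : {vspace bvec r}) :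
  3 <= r -> 1 <= i <= r - 1 -> \dim W = r - i ->
  exists F : {set bvec r},
    is_flat (ground W) F /\
    (restr_iso F K4_indep \/ restr_iso F U34_indep).
Proof.
move=> r3 /andP [i1 ir] dimW.
have dimV : \dim {:bvec r} = r by rewrite dimvf dim_matrix mul1r.
have [u uW] : exists u, u \notin W by apply: exists_notin; rewrite dimV dimW; lia.
have [W2 | W1] := leqP 2 (\dim W).
  have [w1 [w2 [w1W w2W free12]]] := exists_free2 W2.
  have free_u12 : free [:: u; w1; w2].
    rewrite free_cons free12 andbT; apply: contra uW; apply: subvP.
    by apply/span_subvP => x; rewrite !inE => /orP [] /eqP ->.
  by have [F [flatF isoF]] := U34_flat free_u12 uW w1W w2W; exists F; split; [|right].
have [w w0 W_line] : exists2 w, (w != 0)%R & W = <[w]>%VS by apply: dimv1P; lia.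
have [a1 a1_uw] : exists a1, a1 \notin <<[:: u; w]>>%VS.
  by apply: exists_notin; rewrite dimV; exact: leq_ltn_trans (dim_span [:: u; w]) r3.
have free_a1uw : free [:: a1; u; w].
  by rewrite free_cons a1_uw free_cons span_seq1 -W_line uW seq1_free.
by have [F [flatF isoF]] := K4_flat free_a1uw W_line; exists F; split; [|left].
Qed.
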